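(* Let $G=(V,E)$ be a graph, $\prec$ a strict partial order on $P_f(\mathbb{N}^+)$, and $\sigma$ an ordering of $V$. Then there exists an ordering $\tau$ of $V$ with $\sigma=\mathrm{TBLS}(G,\prec,\tau)$ if and only if $\sigma=\mathrm{TBLS}(G,\prec,\sigma)$.
   Context: Let $G=(V,E)$ be a finite undirected graph with $n$ vertices. An ordering of $V$ is a bijection $\sigma:\{1,\dots,n\}\to V$; $\sigma(i)$ is the $i$th vertex. $P_f(\mathbb{N}^+)$ is the set of finite subsets of the positive integers. Given a strict partial order $\prec$ on $P_f(\mathbb{N}^+)$ and an ordering $\tau$ of $V$, the Tie-Breaking Label Search $\mathrm{TBLS}(G,\prec,\tau)$ is the procedure: set $label(v)=\emptyset$ for every $v$; for $i=1,\dots,n$: let Eligible be the set of unnumbered vertices $x$ such that there is no unnumbered vertex $y$ with $label(x)\prec label(y)$; let $v$ be the first vertex of Eligible in the ordering $\tau$; set $\sigma(i)=v$ ($v$ becomes numbered); for every unnumbered neighbour $w$ of $v$ replace $label(w)$ by $label(w)\cup\{i\}$. The output is $\sigma$. *)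

From HB Require Import structures.
From mathcomp Require Import all_boot all_order.
From mathcomp Require Import finmap.
Set Implicit Arguments. Unset Strict Implicit. Unset Printing Implicit Defensive.
Local Open Scope fset_scope.

Definition undirected_graph (V : finType) (e : rel V) : Prop :=
  symmetric e /\ irreflexive e.

Definition strict_porder (prec : rel {fset nat}) : Prop :=
  irreflexive prec /\ transitive prec.

Definition ordering (V : finType) (s : seq V) : Prop :=
  uniq s /\ size s = #|V|.

(* Label of vertex x after the vertices of the prefix p have been numbered
   1, ..., size p (p`_i gets number i+1): the set of numbers of the numbered
   neighbours of x. *)
Definition label (V : finType) (e : rel V) (p : seq V) (x : V) : {fset nat} :=
  [fset i.+1 | i in [seq i <- iota 0 (size p) | e (nth x p i) x]].

Definition eligible (V : finType) (e : rel V) (prec : rel {fset nat})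
    (p : seq V) (x : V) : bool :=
  (x \notin p) &&
  [forall y : V, (y \notin p) ==> ~~ prec (label e p x) (label e p y)].

Definition tbls_next (V : finType) (e : rel V) (prec : rel {fset nat})
    (tau : seq V) (p : seq V) : option V :=
  ohead [seq x <- tau | eligible e prec p x].

Fixpoint tbls_aux (V : finType) (e : rel V) (prec : rel {fset nat})
    (tau : seq V) (k : nat) (p : seq V) : seq V :=
  match k with
  | 0 => p
  | k.+1 =>
    match tbls_next e prec tau p with
    | Some v => tbls_aux e prec tau k (rcons p v)
    | None => p
    end
  end.

Definition TBLS (V : finType) (e : rel V) (prec : rel {fset nat})
    (tau : seq V) : seq V :=
  tbls_aux e prec tau #|V| [::].

From mathcomp Require Import all_boot all_order.
From mathcomp Require Import finmap.

Set Implicit Arguments.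
Unset Strict Implicit.
Unset Printing Implicit Defensive.

(* If TBLS with tie-breaker tau outputs sigma, replay the run with sigma as
   tie-breaker.  Labels, hence eligibility, depend only on the numbered prefix,
   which is the same in both runs.  Before the step that numbers sigma(i), the
   vertices preceding sigma(i) in sigma are exactly the numbered ones, which are
   never eligible; so the first eligible vertex of sigma is sigma(i), the vertex
   tau's run picked (it was eligible).  The converse takes tau := sigma. *)

Lemma eligible_notin (V : finType) (e : rel V) prec (p : seq V) x :
  eligible e prec p x -> x \notin p.
Proof. by case/andP. Qed.

Lemma tbls_next_catl (V : finType) (e : rel V) prec (p s : seq V) :
  tbls_next e prec (p ++ s) p = tbls_next e prec s p.
Proof.
rewrite /tbls_next filter_cat.
suff -> : [seq x <- p | eligible e prec p x] = [::] by [].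
apply/eqP; rewrite -(negbK (_ == _)) -has_filter.
by apply/hasPn => x xp; apply/negP => /eligible_notin; rewrite xp.
Qed.

Lemma tbls_next_some (V : finType) (e : rel V) prec (tau p : seq V) v :
  tbls_next e prec tau p = Some v -> eligible e prec p v.
Proof.
rewrite /tbls_next; case E: [seq x <- tau | eligible e prec p x] => [|a l] //= [<-].
have : a \in [seq x <- tau | eligible e prec p x] by rewrite E mem_head.
by rewrite mem_filter => /andP[].
Qed.

Lemma tbls_next_head (V : finType) (e : rel V) prec (p r : seq V) v :
  eligible e prec p v -> tbls_next e prec (p ++ v :: r) p = Some v.
Proof. by move=> elv; rewrite tbls_next_catl /tbls_next /= elv. Qed.

Lemma tbls_aux_extends (V : finType) (e : rel V) prec (tau : seq V) k p :
  exists r, tbls_aux e prec tau k p = p ++ r.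
Proof.
elim: k p => [|k IH] p /=; first by exists [::]; rewrite cats0.
case: (tbls_next e prec tau p) => [v|]; last by exists [::]; rewrite cats0.
by have [r ->] := IH (rcons p v); exists (v :: r); rewrite cat_rcons.
Qed.

Lemma tbls_aux_self (V : finType) (e : rel V) prec (tau sigma : seq V) k p :
  tbls_aux e prec tau k p = sigma -> tbls_aux e prec sigma k p = sigma.
Proof.
elim: k p => [|k IH] p //=.
case next_v: (tbls_next e prec tau p) => [v|] run_tau.
- have [r def_sigma] := tbls_aux_extends e prec tau k (rcons p v).
  rewrite run_tau cat_rcons in def_sigma.
  have elv := tbls_next_some next_v.
  by rewrite {1}def_sigma tbls_next_head //=; exact: IH.
- by rewrite -run_tau -{1}[p]cats0 tbls_next_catl.
Qed.

Theorem theorem2 (V : finType) (e : rel V) (prec : rel {fset nat})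
    (sigma : seq V) :
  undirected_graph e -> strict_porder prec -> ordering sigma ->
  (exists tau : seq V, ordering tau /\ sigma = TBLS e prec tau) <->
  sigma = TBLS e prec sigma.
Proof.
move=> _ _ sigma_ord; split; last by exists sigma.
by case=> tau [_ sigma_run]; rewrite /TBLS (tbls_aux_self (esym sigma_run)).
Qed.
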